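(* Assume $n\ge3$ and $3\le a\le n$. Let $(i_1,\dots,i_a)\in J^a$ with $i_1\prec i_2\prec\cdots\prec i_a$, and suppose it has at least one breaking pair. Let $(k,l)$ be the breaking pair with the largest value $q$ (i.e. $i_k=q$, $i_l=\bar q$, $n+k-l<q$, and no breaking pair has larger value). Then the number of entries strictly between positions $k$ and $l$ equals $n-q$, i.e. $l-k-1=n-q$.
   Context: Let $J=\{1\prec2\prec\cdots\prec n\prec\bar n\prec\cdots\prec\bar2\prec\bar1\}$ be a totally ordered set of $2n$ symbols. For a sequence $(i_1,\dots,i_a)\in J^a$, a breaking pair is a pair of positions $k<l$ with $i_k=c$ and $i_l=\bar c$ for some $1\le c\le n$ such that $n+k-l<c$; its value is $c$. *)

From mathcomp Require Import all_boot.
Set Implicit Arguments. Unset Strict Implicit. Unset Printing Implicit Defensive.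

(* Symbols of J: [JU c] is the unbarred symbol c, [JB c] the barred symbol \bar c
   (for 1 <= c <= n). *)
Inductive Jsym := JU of nat | JB of nat.

Definition Jvalid (n : nat) (j : Jsym) : bool :=
  match j with JU c | JB c => (1 <= c <= n) end.

Definition Jlt (j1 j2 : Jsym) : bool :=
  match j1, j2 with
  | JU c, JU d => c < d
  | JU _, JB _ => true
  | JB _, JU _ => false
  | JB c, JB d => d < c
  end.

(* A sequence (i_1,...,i_a) in J^a is represented by i : nat -> Jsym,
   position k (1 <= k <= a) holding i k. *)

Definition breaking_pair (n a : nat) (i : nat -> Jsym) (k l c : nat) : Prop :=
  [/\ (1 <= k < l) && (l <= a), 1 <= c <= n,
      i k = JU c, i l = JB c & n + k - l < c].

(* Read the increasing sequence through the rank of J, i c |-> c and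
   \bar c |-> 2n+1-c, which turns it into a strictly increasing sequence of
   integers.  A breaking pair (k,l) of value q already gives l-k-1 >= n-q.
   If the inequality were strict, the more than n-q ranks strictly between
   positions k and l would lie in the window (q, 2n+1-q); peeling off the
   lowest or the highest of them while the window shrinks by one from the
   corresponding side, one ends up with an inner pair of ranks c and 2n+1-c,
   c > q, that is again breaking, contradicting the maximality of q. *)

From mathcomp Require Import all_boot.
From mathcomp Require Import zify.

Definition Jrank (n : nat) (x : Jsym) : nat :=
  match x with JU c => c | JB c => (2 * n).+1 - c end.

Lemma Jlt_Jrank n x y :
  Jvalid n x -> Jvalid n y -> Jlt x y -> Jrank n x < Jrank n y.
Proof. by case: x => c; case: y => d /= /andP[? ?] /andP[? ?] ?; lia. Qed.

Lemma Jrank_JU n x c : Jvalid n x -> Jrank n x = c -> c <= n -> x = JU c.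
Proof. by case: x => d /= /andP[? ?] <- ?; [|lia]. Qed.

Lemma Jrank_JB n x c :
  Jvalid n x -> Jrank n x = (2 * n).+1 - c -> 1 <= c <= n -> x = JB c.
Proof. by case: x => d /= /andP[? ?] ? ?; [lia | congr JB; lia]. Qed.

Lemma Jrank_increasing {n a : nat} {i : nat -> Jsym} :
  (forall k, 1 <= k <= a -> Jvalid n (i k)) ->
  (forall k, 1 <= k < a -> Jlt (i k) (i k.+1)) ->
  forall t t', 1 <= t -> t < t' -> t' <= a -> Jrank n (i t) < Jrank n (i t').
Proof.
move=> i_valid i_incr t t' Ht Htt' Ht'.
apply: (@homo_ltn_in nat [pred u | 1 <= u <= a] (fun t => Jrank n (i t)) (fun x y => x < y));
  rewrite ?inE; try lia.
- by move=> x y; rewrite !inE => ? ? z; rewrite inE; lia.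
move=> u; rewrite !inE => /andP[? ?] /andP[? ?].
by apply: Jlt_Jrank; [apply: i_valid | apply: i_valid | apply: i_incr]; lia.
Qed.

Lemma window_breaking_ranks (n : nat) (r : nat -> nat) m p s : 0 < m -> p <= s ->
  (forall t t', p <= t -> t < t' -> t' <= s -> r t < r t') ->
  (forall t, p <= t <= s -> m <= r t <= (2 * n).+1 - m) ->
  n < s - p + m ->
  exists k l c, [/\ p <= k < l, l <= s, m <= c,
                    r k = c /\ r l = (2 * n).+1 - c & n + k - l < c].
Proof.
move Hd: (s - p) => d; elim: d m p s Hd => [|d IH] m p s Hd m_gt0 Hps r_incr r_win Hlen.
  by have := r_win p; lia.
have [rp_m | /eqP rp_m] := eqVneq (r p) m; last first.
  have [k [l [c [Hkl Hl Hc Hr Hb]]]] : exists k l c,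
      [/\ p <= k < l, l <= s.-1, m.+1 <= c,
          r k = c /\ r l = (2 * n).+1 - c & n + k - l < c].
    apply: IH; [lia | lia | lia | move=> t t' *; apply: r_incr; lia | | lia].
    move=> t Ht; have := r_win p ltac:(lia); have := r_win s ltac:(lia).
    have := r_incr t s ltac:(lia) ltac:(lia) (leqnn s).
    by have [<-|/eqP ?] := eqVneq p t; [|have := r_incr p t ltac:(lia) ltac:(lia) ltac:(lia)]; lia.
  by exists k, l, c; split => //; lia.
have [rs_m | /eqP rs_m] := eqVneq (r s) ((2 * n).+1 - m).
  by exists p, s, m; split => //; lia.
have [k [l [c [Hkl Hl Hc Hr Hb]]]] : exists k l c,
    [/\ p.+1 <= k < l, l <= s, m.+1 <= c,
        r k = c /\ r l = (2 * n).+1 - c & n + k - l < c].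
  apply: IH; [lia | lia | lia | move=> t t' *; apply: r_incr; lia | | lia].
  move=> t Ht; have := r_win p ltac:(lia); have := r_win s ltac:(lia).
  have := r_incr p t (leqnn p) ltac:(lia) ltac:(lia).
  by have [->|/eqP ?] := eqVneq t s; [|have := r_incr t s ltac:(lia) ltac:(lia) (leqnn s)]; lia.
by exists k, l, c; split => //; lia.
Qed.

Theorem mainTheorem16 (n a : nat) (i : nat -> Jsym) :
  3 <= n -> 3 <= a <= n ->
  (forall k, 1 <= k <= a -> Jvalid n (i k)) ->
  (forall k, 1 <= k < a -> Jlt (i k) (i k.+1)) ->
  (exists k l c, breaking_pair n a i k l c) ->
  forall k l q, breaking_pair n a i k l q ->
  (forall k' l' c', breaking_pair n a i k' l' c' -> c' <= q) ->
  l - k - 1 = n - q.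
Proof.
move=> _ _ i_valid i_incr _ k l q [/andP[/andP[Hk Hkl] Hla] /andP[Hq Hqn] Hik Hil Hb] Hmax.
pose r t := Jrank n (i t).
have r_incr t t' : 1 <= t -> t < t' -> t' <= a -> r t < r t'.
  exact: (Jrank_increasing i_valid i_incr).
have [rk rl] : r k = q /\ r l = (2 * n).+1 - q by rewrite /r Hik Hil.
have [|long] := leqP (l - k - 1) (n - q); first by lia.
have r_incr_in t t' : k.+1 <= t -> t < t' -> t' <= l.-1 -> r t < r t'.
  by move=> *; apply: r_incr; lia.
have r_in t : k.+1 <= t <= l.-1 -> q.+1 <= r t <= (2 * n).+1 - q.+1.
  by move=> Ht; have := r_incr k t; have := r_incr t l; lia.
have [k' [l' [c [Hkl' Hl' Hc [rk' rl'] Hb']]]] :=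
  @window_breaking_ranks n r q.+1 k.+1 l.-1 (ltn0Sn q) ltac:(lia) r_incr_in r_in ltac:(lia).
have Hcn : c <= n by have := r_incr k' l'; lia.
suff : breaking_pair n a i k' l' c by move/Hmax; lia.
split; [lia | lia | apply: (@Jrank_JU n) rk' _ | apply: (@Jrank_JB n) rl' _ | lia];
  by [apply: i_valid; lia | lia].
Qed.
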